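(* For all 5-complex numbers $u',u''$, the modulus of their product satisfies $|u'u''|\leq \sqrt{5}\,|u'|\,|u''|$.
   Context: A 5-complex number is an expression $u=x_0+h_1x_1+h_2x_2+h_3x_3+h_4x_4$ with $x_0,\dots,x_4\in\mathbb{R}$. Addition is componentwise. Multiplication is the commutative, associative, bilinear product determined by $h_jh_k=h_{(j+k)\bmod 5}$ with $h_0=1$; explicitly, if $u=\sum_j h_jx_j$ and $u'=\sum_j h_jx'_j$, then the coefficient of $h_l$ in $uu'$ is $\sum_{j+k\equiv l \pmod 5} x_jx'_k$. The modulus of $u$ is $|u|=d=(x_0^2+x_1^2+x_2^2+x_3^2+x_4^2)^{1/2}$. *)

From mathcomp Require Import all_boot all_order all_algebra.
Set Implicit Arguments. Unset Strict Implicit. Unset Printing Implicit Defensive.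
Import Order.TTheory GRing.Theory Num.Theory.
Local Open Scope ring_scope.

(* A 5-complex number u = x_0 + h_1 x_1 + ... + h_4 x_4 is represented by its
   coefficient family x : 'I_5 -> R (x j = coefficient of h_j, h_0 = 1). *)
Definition cplx5 (R : rcfType) := 'I_5 -> R.

Definition mul5 (R : rcfType) (u v : cplx5 R) : cplx5 R :=
  fun l => \sum_(j < 5) \sum_(k < 5 | ((j + k) %% 5 == l)%N) u j * v k.

Definition mod5 (R : rcfType) (u : cplx5 R) : R :=
  Num.sqrt (\sum_(j < 5) u j ^+ 2).

From mathcomp Require Import all_boot all_order all_algebra.
From mathcomp Require Import ring.
Import Order.TTheory GRing.Theory Num.Theory.
Local Open Scope ring_scope.

(* The product of 5-complex numbers is the cyclic convolution on Z/5Z: the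
   coefficient of h_l in u v is sum_j u_j v_(l-j). By Cauchy-Schwarz each of
   these five coefficients has square at most |u|^2 |v|^2, because
   j |-> l - j permutes the indices; summing over l gives
   |u v|^2 <= 5 |u|^2 |v|^2. The same argument gives the factor sqrt n for
   cyclic convolution on Z/nZ. *)

Lemma sum_mul_sqr_le (R : realDomainType) (I : finType) (a b : I -> R) :
  (\sum_i a i * b i) ^+ 2 <= (\sum_i a i ^+ 2) * (\sum_i b i ^+ 2).
Proof.
pose D := \sum_i \sum_j (a i ^+ 2 * b j ^+ 2 - (a i * b i) * (a j * b j)).
have DE : D = (\sum_i a i ^+ 2) * (\sum_i b i ^+ 2) - (\sum_i a i * b i) ^+ 2.
  rewrite expr2 !mulr_suml -sumrB; apply: eq_bigr => i _.
  by rewrite !mulr_sumr -sumrB.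
have lagrange : D *+ 2 = \sum_i \sum_j (a i * b j - a j * b i) ^+ 2.
  rewrite mulr2n {2}/D exchange_big -big_split /=; apply: eq_bigr => i _.
  by rewrite -big_split; apply: eq_bigr => j _ /=; clear D DE; ring.
have : 0 <= D *+ 2.
  rewrite lagrange; apply: sumr_ge0 => i _.
  by apply: sumr_ge0 => j _; apply: sqr_ge0.
by rewrite DE pmulrn_lge0 // subr_ge0.
Qed.

Definition cyclic_conv {R : pzSemiRingType} {n : nat} (u v : 'I_n -> R)
    (l : 'I_n) : R :=
  \sum_(j < n) \sum_(k < n | ((j + k) %% n == l)%N) u j * v k.

Section CyclicConvolution.

Variables (R : realDomainType) (n : nat).
Implicit Types u v : 'I_n.+1 -> R.

Lemma cyclic_convE u v l : cyclic_conv u v l = \sum_j u j * v (l - j).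
Proof.
apply: eq_bigr => j _; apply: (big_pred1 (l - j)) => k /=.
(* The sum of ordinals in 'I_n.+1 is their sum modulo n.+1. *)
rewrite -[((j + k) %% _)%N]/(val (j + k)%R) val_eqE.
by rewrite [k == _]eq_sym subr_eq eq_sym addrC.
Qed.

Lemma sum_sqr_shift v l : \sum_j v (l - j) ^+ 2 = \sum_j v j ^+ 2.
Proof.
rewrite (reindex_inj (subrI l)) /=.
by apply: eq_bigr => j _; rewrite subKr.
Qed.

Lemma cyclic_conv_sqr_le u v l :
  cyclic_conv u v l ^+ 2 <= (\sum_j u j ^+ 2) * (\sum_j v j ^+ 2).
Proof. by rewrite cyclic_convE -(sum_sqr_shift v l) sum_mul_sqr_le. Qed.

Lemma sum_cyclic_conv_sqr_le u v :
  \sum_l cyclic_conv u v l ^+ 2 <=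
  n.+1%:R * (\sum_j u j ^+ 2) * (\sum_j v j ^+ 2).
Proof.
apply: le_trans (ler_sum _ (fun l _ => cyclic_conv_sqr_le u v l)) _.
by rewrite sumr_const card_ord -mulrA mulr_natl.
Qed.

End CyclicConvolution.

Theorem mainTheorem1 (R : rcfType) (u' u'' : cplx5 R) :
  mod5 (mul5 u' u'') <= Num.sqrt 5 * mod5 u' * mod5 u''.
Proof.
have sum_sqr_ge0 (u : cplx5 R) : 0 <= \sum_j u j ^+ 2.
  by apply: sumr_ge0 => j _; apply: sqr_ge0.
rewrite /mod5 -!sqrtrM ?mulr_ge0 ?ler0n ?sum_sqr_ge0 // ler_sqrt;
  last by rewrite !mulr_ge0 ?ler0n ?sum_sqr_ge0.
exact: (@sum_cyclic_conv_sqr_le R 4).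
Qed.
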